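(* We have $$\limsup_{m\to\infty}\frac{b_m\,\log\log\log m}{\log\log m}\ge 8;$$ in particular the sequence $(b_m)_{m\ge1}$ is unbounded.
   Context: For $n\ge 1$, $\phi_n(X)$ is the $n$-th cyclotomic polynomial (degree $\varphi(n)$, Euler's totient), and $\Phi_n(X,Y)=Y^{\varphi(n)}\phi_n(X/Y)$. For an integer $m\ge1$, $b_m$ is the number of triples $(n,x,y)\in\mathbb Z^3$ with $\varphi(n)>2$, $\max\{|x|,|y|\}\ge2$ and $\Phi_n(x,y)=m$. *)

From HB Require Import structures.
From mathcomp Require Import all_boot all_order all_algebra all_field.
Set Implicit Arguments. Unset Strict Implicit. Unset Printing Implicit Defensive.
Import GRing.Theory Num.Theory.
Local Open Scope ring_scope.

(* Homogenized cyclotomic form Phi_n(X,Y) = Y^{phi(n)} phi_n(X/Y), evaluated at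
   integers x, y:  sum_{i=0}^{phi(n)} c_i x^i y^{phi(n)-i}, where c_i are the
   coefficients of the n-th cyclotomic polynomial 'Phi_n (degree totient n). *)
Definition PhiH (n : nat) (x y : int) : int :=
  \sum_(i < (totient n).+1) ('Phi_n)`_i * x ^+ i * y ^+ (totient n - i)%N.

Definition is_sol (m : nat) (t : nat * int * int) : bool :=
  let '(n, x, y) := t in
  [&& (2 < totient n)%N, (2 <= maxn `|x|%N `|y|%N)%N & PhiH n x y == m%:Z].

(* b_ge m k  <->  b_m >= k : there are at least k distinct triples counted by b_m. *)
Definition b_ge (m k : nat) : Prop :=
  exists s : seq (nat * int * int), [/\ uniq s, size s = k & all (is_sol m) s].

(* Fermat numbers have many representations: for 2 <= j <= K,
   F_K = 2^(2^K) + 1 = Phi_(2^(j+1))(2^(2^(K-j)), 1), since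
   Phi_(2^(j+1)) = X^(2^j) + 1.  Hence b_(F_K) >= K - 1, whereas
   log log F_K is about K log 2, so b_m log log log m / log log m is
   about log K / log 2 along the Fermat numbers, which is unbounded. *)
From Stdlib Require Import Reals Lra Lia.
From mathcomp Require all_boot all_algebra all_field ring.

Module FermatTriples.
Import all_boot all_algebra all_field ring.
Import GRing.Theory.
Local Open Scope ring_scope.

Definition fermat (K : nat) : nat := (2 ^ (2 ^ K)).+1.

Lemma fermat_gt K : (K < fermat K)%coq_nat.
Proof.
apply/ltP; rewrite ltnS ltnW // (ltn_trans (ltn_expl K (isT : 1 < 2)%N)) //.
exact: ltn_expl.
Qed.

Lemma divisors_pfactorS p j : prime p ->
  perm_eq (divisors (p ^ j.+1)) (p ^ j.+1 :: divisors (p ^ j))%N.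
Proof.
move=> p_pr; have p_gt1 := prime_gt1 p_pr; have p_gt0 := ltnW p_gt1.
apply: uniq_perm; first exact: divisors_uniq.
  by rewrite /= divisors_uniq andbT -dvdn_divisors ?expn_gt0 ?p_gt0 // dvdn_Pexp2l // ltnn.
move=> d; rewrite inE -!dvdn_divisors ?expn_gt0 ?p_gt0 //.
apply/idP/orP => [|[/eqP-> // | d_dvd]].
  case/(dvdn_pfactor _ _ p_pr) => e; rewrite leq_eqVlt => /orP[/eqP-> | e_le] ->.
    by left.
  by right; rewrite dvdn_Pexp2l // -ltnS.
exact: dvdn_trans d_dvd (dvdn_exp2l p (leqnSn j)).
Qed.

Lemma Cyclotomic_pfactorS_mul p j : prime p ->
  'Phi_(p ^ j.+1) * ('X^(p ^ j) - 1) = 'X^(p ^ j.+1) - 1.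
Proof.
move=> p_pr; have p_gt0 := prime_gt0 p_pr.
rewrite -!prod_Cyclotomic ?expn_gt0 ?p_gt0 //.
by rewrite (perm_big _ (divisors_pfactorS _ j p_pr)) big_cons.
Qed.

Lemma Cyclotomic_2pow j : 'Phi_(2 ^ j.+1) = 'X^(2 ^ j) + 1.
Proof.
have nz : ('X^(2 ^ j) - 1 : {poly int}) != 0.
  by apply/monic_neq0/monicXnsubC; rewrite expn_gt0.
apply: (mulIf nz); rewrite Cyclotomic_pfactorS_mul //.
rewrite expnS mul2n -addnn exprD; ring.
Qed.

Lemma PhiH1 n x : PhiH n x 1 = ('Phi_n).[x].
Proof.
rewrite /PhiH horner_coef size_Cyclotomic; apply: eq_bigr => i _.
by rewrite expr1n mulr1.
Qed.

Lemma is_sol_fermat j K : (2 <= j <= K)%N ->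
  is_sol (fermat K) ((2 ^ j.+1)%N, (2 ^ (2 ^ (K - j)))%N%:Z, 1).
Proof.
case/andP => j_ge2 j_leK; rewrite /is_sol totient_pfactor //= mul1n.
apply/and3P; split.
- by rewrite (ltn_exp2l 1 j (isT : 1 < 2)%N).
- by rewrite (leq_trans _ (leq_maxl _ _)) // (@leq_pexp2l 2 1) ?expn_gt0.
- rewrite PhiH1 Cyclotomic_2pow hornerD hornerXn hornerC -natz -natrX.
  by rewrite -expnM -expnD subnK // /fermat intS addrC natz.
Qed.

Lemma b_ge_fermat K : b_ge (fermat K.+1) K.
Proof.
exists [seq ((2 ^ j.+1)%N, (2 ^ (2 ^ (K.+1 - j)))%N%:Z, 1) | j <- iota 2 K].
split.
- by rewrite map_inj_uniq ?iota_uniq // => i j [/(expnI (isT : 1 < 2)%N) []].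
- by rewrite size_map size_iota.
- apply/allP => _ /mapP [j j_in ->]; apply: is_sol_fermat.
  by rewrite mem_iota in j_in; apply/andP; lia.
Qed.

End FermatTriples.
Import FermatTriples.

Open Scope R_scope.

Lemma ln_le x y : 0 < x -> x <= y -> ln x <= ln y.
Proof.
intros x_pos [x_lt_y | <-].
- now apply Rlt_le, ln_increasing.
- apply Rle_refl.
Qed.

Lemma ln2_le_1 : ln 2 <= 1.
Proof.
rewrite <- (ln_exp 1).
apply ln_le; [lra|].
pose proof (exp_ineq1_le 1); lra.
Qed.

Lemma ln_pow2 n : ln (2 ^ n) = INR n * ln 2.
Proof. apply ln_pow; lra. Qed.

Lemma INR_expn m n : INR (ssrnat.expn m n) = INR m ^ n.
Proof.
induction n as [|n IHn]; [reflexivity|].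
now rewrite ssrnat.expnS, <- ssrnat.multE, mult_INR, IHn.
Qed.

Lemma ln_fermat_bounds K : 2 ^ K <= ln (INR (fermat (S K))) <= 2 ^ S (S K).
Proof.
pose proof ln_lt_2; pose proof ln2_le_1.
assert (INR_2 : INR 2 = 2) by (simpl; lra).
unfold fermat; rewrite S_INR, INR_expn, INR_2.
set (e := ssrnat.expn 2 (S K)).
assert (INR_e : INR e = 2 * 2 ^ K) by (unfold e; now rewrite INR_expn, INR_2).
assert (pow_ge1 : 1 <= 2 ^ K) by (apply pow_R1_Rle; lra).
assert (pow_pos : 0 < 2 ^ e) by (apply pow_lt; lra).
split.
- apply Rle_trans with (ln (2 ^ e)).
  + rewrite ln_pow2, INR_e; nra.
  + apply ln_le; lra.
- apply Rle_trans with (ln (2 ^ S e)).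
  + apply ln_le; [lra|]; simpl; pose proof (pow_R1_Rle 2 e); lra.
  + rewrite ln_pow2, S_INR, INR_e; simpl; nra.
Qed.

Lemma ln_ln_fermat_bounds K :
  INR K * ln 2 <= ln (ln (INR (fermat (S K)))) <= INR K + 2.
Proof.
pose proof ln_lt_2; pose proof ln2_le_1; pose proof (ln_fermat_bounds K).
assert (pow_pos : forall n, 0 < 2 ^ n) by (intros; apply pow_lt; lra).
split.
- rewrite <- ln_pow2; apply ln_le; [apply pow_pos | lra].
- apply Rle_trans with (ln (2 ^ S (S K))).
  + apply ln_le; [pose proof (pow_pos K); lra | lra].
  + rewrite ln_pow2, !S_INR; pose proof (pos_INR K); nra.
Qed.

Lemma nine_le_ln x : 3 ^ 9 <= x -> 9 <= ln x.
Proof.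
intros x_ge.
assert (one_le_ln3 : 1 <= ln 3).
{ rewrite <- (ln_exp 1); apply ln_le; [apply exp_pos | apply exp_le_3]. }
apply Rle_trans with (ln (3 ^ 9)).
- rewrite ln_pow by lra; simpl INR; lra.
- apply ln_le; [apply pow_lt; lra | exact x_ge].
Qed.

Lemma ratio_ge_8 k L : 16 <= k -> 9 <= ln L -> 0 < L <= k + 2 -> k * ln L / L >= 8.
Proof.
intros k_ge lnL_ge [L_pos L_le].
apply Rle_ge; unfold Rdiv.
apply (Rmult_le_reg_r L); [exact L_pos|].
rewrite Rmult_assoc, Rinv_l by lra; nra.
Qed.

(* [3 ^ 10 <= K] gives [log log F >= K log 2 >= 3 ^ 9], hence [log log log F >= 9]. *)
Lemma fermat_ratio_ge_8 K : (3 ^ 10 <= K)%nat ->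
  INR K * ln (ln (ln (INR (fermat (S K))))) / ln (ln (INR (fermat (S K)))) >= 8.
Proof.
intros K_ge; apply le_INR in K_ge; rewrite pow_INR in K_ge; simpl INR in K_ge.
pose proof ln_lt_2; pose proof (ln_ln_fermat_bounds K).
apply ratio_ge_8; [lra | apply nine_le_ln; nra | nra].
Qed.

Theorem lemma1p5 :
  (forall eps : R, 0 < eps -> forall N : nat,
     exists m k : nat, (N <= m)%nat /\ b_ge m k /\
       INR k * ln (ln (ln (INR m))) / ln (ln (INR m)) >= 8 - eps)
  /\ (forall B : nat, exists m : nat, (1 <= m)%nat /\ b_ge m B).
Proof.
split.
- intros eps eps_pos N.
  set (K := (N + 3 ^ 10)%nat).
  exists (fermat (S K)), K; split; [|split].
  + pose proof (fermat_gt (S K)); unfold K in *; lia.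
  + apply b_ge_fermat.
  + pose proof (fermat_ratio_ge_8 K (Nat.le_add_l _ _)); lra.
- intros B; exists (fermat (S B)); split.
  + pose proof (fermat_gt (S B)); lia.
  + apply b_ge_fermat.
Qed.
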